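(* Let $F$ be a Boolean formula over $n$ variables and let $1\le m\le n$. If $|\mathrm{Sol}(F)| \le 2^{m-2}$, then $\varphi_{stock}^F(m)$ is true.
   Context: $\mathrm{Sol}(F)\subseteq\{0,1\}^n$ denotes the set of satisfying assignments of $F$. For $n,m,k\ge 1$, $\mathcal{H}(n,m,k)$ denotes a fixed explicit $k$-wise independent family of hash functions $\{0,1\}^n\to\{0,1\}^m$: for $h$ drawn uniformly from $\mathcal{H}(n,m,k)$, all distinct $y_1,\dots,y_k\in\{0,1\}^n$ and all $\alpha_1,\dots,\alpha_k\in\{0,1\}^m$, $\Pr[h(y_1)=\alpha_1\wedge\cdots\wedge h(y_k)=\alpha_k]=2^{-mk}$. The statement $\varphi_{stock}^F(m)$ means: there exist $h_1,\dots,h_m\in\mathcal{H}(n,m,2)$ such that for every $z_1\in\mathrm{Sol}(F)$ there is an index $i\in\{1,\dots,m\}$ such that no $z_2\in\mathrm{Sol}(F)$ with $z_2\neq z_1$ satisfies $h_i(z_2)=h_i(z_1)$. *)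

From mathcomp Require Import all_boot.
Set Implicit Arguments. Unset Strict Implicit. Unset Printing Implicit Defensive.

Notation bits n := (n.-tuple bool).

Inductive formula (n : nat) : Type :=
| FVar of 'I_n
| FTrue
| FFalse
| FNeg of formula n
| FAnd of formula n & formula n
| FOr of formula n & formula n.

Fixpoint feval (n : nat) (F : formula n) (x : bits n) : bool :=
  match F with
  | FVar i => tnth x i
  | FTrue => true
  | FFalse => false
  | FNeg G => ~~ feval G x
  | FAnd G H => feval G x && feval H x
  | FOr G H => feval G x || feval H x
  end.

Definition Sol (n : nat) (F : formula n) : {set bits n} := [set x | feval F x].

Definition hashfun (n m : nat) := {ffun bits n -> bits m}.

(* A family of hash functions is a (nonempty) finite list, drawn uniformly
   (multiplicities allowed).  It is k-wise independent if for all distinct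
   y_1..y_k and all alpha_1..alpha_k,
   Pr_h[h(y_1)=alpha_1 /\ ... /\ h(y_k)=alpha_k] = 2^{-mk},
   i.e. #{h in H | ...} * 2^(m*k) = |H|. *)
Definition kwise_independent (n m k : nat) (H : seq (hashfun n m)) : Prop :=
  0 < size H /\
  forall (ys : k.-tuple (bits n)), uniq ys ->
  forall (alphas : k.-tuple (bits m)),
    count (fun h : hashfun n m => [forall i : 'I_k, h (tnth ys i) == tnth alphas i]) H
      * 2 ^ (m * k) = size H.

Definition phi_stock (n m : nat) (H : seq (hashfun n m)) (F : formula n) : Prop :=
  exists hs : m.-tuple (hashfun n m),
    all (fun h => h \in H) hs /\
    forall z1, z1 \in Sol F ->
      exists i : 'I_m,
        forall z2, z2 \in Sol F -> z2 != z1 -> tnth hs i z2 != tnth hs i z1.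

From mathcomp Require Import all_boot zify.
Set Implicit Arguments. Unset Strict Implicit. Unset Printing Implicit Defensive.

(* For a pairwise independent family, two distinct points collide under a random
   hash with probability 2^-m, so by the union bound a point of S = Sol(F) collides
   with another point of S with probability at most |S| / 2^m <= 1/4.  Averaging
   over the family, for any set R some hash leaves at most a quarter of R in
   collision.  Choosing h_1, ..., h_m greedily, each time for the points not yet
   isolated by an earlier hash, leaves at most |S| / 4^m < 1 such point. *)

Lemma count_sumE (T : Type) (a : pred T) (s : seq T) :
  count a s = \sum_(x <- s) a x.
Proof. by rewrite -sumn_count sumnE big_map. Qed.

Lemma exists_le_mean (T : eqType) (s : seq T) (f : T -> nat) :
  0 < size s -> exists2 x, x \in s & f x * size s <= \sum_(y <- s) f y.
Proof.
move=> s_gt0; have [/hasP [x xs le_x] | /hasPn all_gt] :=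
  boolP (has (fun x => f x * size s <= \sum_(y <- s) f y) s); first by exists x.
suff : size s * (\sum_(y <- s) f y).+1 <= (\sum_(y <- s) f y) * size s by nia.
rewrite mulnC -iter_addn_0 -count_predT -big_const_seq big_distrl /=.
rewrite big_seq_cond [leqRHS]big_seq_cond; apply: leq_sum => x /andP[/all_gt].
by rewrite ltnNge.
Qed.

Definition collides n m (S : {set bits n}) (h : hashfun n m) (z : bits n) :=
  [exists z' in S, (z' != z) && (h z' == h z)].

Definition uncovered n m (S : {set bits n}) (hs : seq (hashfun n m)) :=
  [set z in S | all (collides S ^~ z) hs].

Lemma exists_isolating_index n m k (S : {set bits n}) (hs : k.-tuple (hashfun n m))
    (z : bits n) : z \in S -> z \notin uncovered S hs ->
  exists i : 'I_k, forall z', z' \in S -> z' != z -> tnth hs i z' != tnth hs i z.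
Proof.
rewrite inE => -> /= /allPn [h /tnthP [i ->] /existsPn isolated].
by exists i => z' z'S ne_z'; have := isolated z'; rewrite z'S ne_z'.
Qed.

Section GreedyIsolation.

Variables (n m : nat) (H : seq (hashfun n m)).
Hypothesis H_2wise : kwise_independent 2 H.

Lemma count_collision (y1 y2 : bits n) : y1 != y2 ->
  count (fun h : hashfun n m => h y1 == h y2) H * 2 ^ m = size H.
Proof.
move=> y12; have [_ indep] := H_2wise.
have joint a : count (fun h : hashfun n m => (h y1 == a) && (h y2 == a)) H
    * 2 ^ (m * 2) = size H.
  have uniq_y : uniq [tuple y1; y2] by rewrite /= inE y12.
  rewrite -(indep _ uniq_y [tuple a; a]); congr (_ * _); apply: eq_count => h.
  apply/andP/forallP => [[h1 h2] [[|[|]]] //= *| h_a]; rewrite /tnth //=.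
  by split; [apply: h_a ord0 | apply: h_a ord_max].
have split_value : count (fun h : hashfun n m => h y1 == h y2) H =
    \sum_(a : bits m) count (fun h : hashfun n m => (h y1 == a) && (h y2 == a)) H.
  under [RHS]eq_bigr do rewrite count_sumE.
  rewrite count_sumE exchange_big; apply: eq_bigr => h _.
  rewrite (bigD1 (h y1)) //= eqxx [h y2 == _]eq_sym big1 ?addn0 // => a.
  by rewrite eq_sym => /negbTE ->.
apply/eqP; rewrite -(eqn_pmul2r (expn_gt0 2 m)) -mulnA -expnD addnn -muln2.
rewrite split_value big_distrl /=; under eq_bigr do rewrite joint.
by rewrite sum_nat_const card_tuple card_bool mulnC.
Qed.

Variable S : {set bits n}.

Lemma count_collides_le (z : bits n) :
  count (collides S ^~ z) H * 2 ^ m <= #|S| * size H.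
Proof.
have union_bound : count (collides S ^~ z) H <=
    \sum_(z' in S :\ z) count (fun h : hashfun n m => h z' == h z) H.
  under eq_bigr do rewrite count_sumE.
  rewrite count_sumE [leqRHS]exchange_big; apply: leq_sum => h _.
  case: (boolP (collides S h z)) => // /existsP [z' /andP [z'S /andP [ne_z' eq_h]]].
  by rewrite (bigD1 z') /= ?eq_h ?leq_addr // !inE ne_z'.
apply: leq_trans (leq_mul union_bound (leqnn _)) _; rewrite big_distrl /=.
under eq_bigr => z' /setD1P[ne_z' _] do rewrite count_collision //.
by rewrite sum_nat_const leq_mul2r subset_leq_card ?orbT ?subD1set.
Qed.

Hypothesis S_small : #|S| * 4 <= 2 ^ m.

Lemma exists_hash_quartering_collisions (R : {set bits n}) :
  exists2 h, h \in H & #|[set z in R | collides S h z]| * 4 <= #|R|.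
Proof.
pose f (h : hashfun n m) := #|[set z in R | collides S h z]|.
have [h hH le_mean] := exists_le_mean f (proj1 H_2wise).
exists h => //.
have double_count : \sum_(h' <- H) f h' = \sum_(z in R) count (collides S ^~ z) H.
  under [RHS]eq_bigr do rewrite count_sumE.
  rewrite exchange_big; apply: eq_bigr => h' _.
  rewrite /f -sum1_card big_mkcond [RHS]big_mkcond; apply: eq_bigr => z _.
  by rewrite inE; case: (z \in R).
have sum_bound : (\sum_(z in R) count (collides S ^~ z) H) * 2 ^ m
    <= #|R| * #|S| * size H.
  rewrite big_distrl -mulnA -sum_nat_const.
  by apply: leq_sum => z _; apply: count_collides_le.
have le_fh : f h * 2 ^ m <= #|R| * #|S|.
  rewrite -(leq_pmul2r (proj1 H_2wise)) mulnAC.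
  by apply: leq_trans sum_bound; rewrite leq_mul2r -double_count le_mean orbT.
 rewrite -(leq_pmul2r (expn_gt0 2 m)) [leqLHS]mulnAC.
apply: leq_trans (leq_mul le_fh (leqnn 4)) _.
by rewrite -mulnA leq_mul2l S_small orbT.
Qed.

Lemma uncovered_cons (h : hashfun n m) (hs : seq (hashfun n m)) :
  uncovered S (h :: hs) = [set z in uncovered S hs | collides S h z].
Proof. by apply/setP => z; rewrite !inE /= [collides S h z && _]andbC andbA. Qed.

Lemma exists_covering_tuple k : exists hs : k.-tuple (hashfun n m),
  all (mem H) hs /\ #|uncovered S hs| * 4 ^ k <= #|S|.
Proof.
elim: k => [|k [hs [hsH small_unc]]].
  exists [tuple]; split; rewrite // muln1 subset_leq_card //.
  by apply/subsetP => z; rewrite inE => /andP[].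
have [h hH quarter] := exists_hash_quartering_collisions (uncovered S hs).
exists [tuple of h :: hs]; split; first by rewrite /= hH.
rewrite uncovered_cons expnS mulnA; apply: leq_trans small_unc.
by rewrite leq_mul2r quarter orbT.
Qed.

End GreedyIsolation.

Theorem lemma3p2 (n m : nat) (H : seq (hashfun n m)) (F : formula n) :
  kwise_independent 2 H ->
  1 <= m -> m <= n ->
  (* |Sol(F)| <= 2^(m-2), stated without truncated subtraction *)
  #|Sol F| * 4 <= 2 ^ m ->
  phi_stock H F.
Proof.
move=> H_2wise _ _ small.
have [hs [hsH small_unc]] := exists_covering_tuple H_2wise small m.
have no_uncovered : uncovered (Sol F) hs = set0.
  apply/eqP; rewrite -cards_eq0; apply/eqP.
  have := expn_gt0 2 m; have : 4 ^ m = 2 ^ m * 2 ^ m by rewrite -expnMn.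
  nia.
exists hs; split => // z zS; apply: exists_isolating_index => //.
by rewrite no_uncovered inE.
Qed.
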